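(* Let $d,H\in\mathbb{N}$, $d\geq2$, $0<s\leq\frac{1}{4}$, $N\geq(2\sqrt{d}/s)^3H^{\frac{1}{d-1}}$, let \[X_{1},X_{2},\ldots,X_{H}\subseteq \mathbb{R}^{d-1}\times [\tfrac{1}{2}+s,H+\tfrac{1}{2}-s]\] be pairwise disjoint, and suppose that $X:=\bigcup_{m=1}^{H}X_{m}$ is $s$-separated. Then there exists a $2^{8}N^{2}H^{2}$-bilipschitz mapping $\Psi\colon \mathbb{R}^{d}\to\mathbb{R}^{d}$ such that (i) $\Psi(x)=x$ for all $x\in\mathbb{R}^{d-1}\times(\mathbb{R}\setminus (\frac{1}{2},H+\frac{1}{2}))$; (ii) $\Psi(X_{m})\subseteq (\frac{1}{N}\mathbb{Z}^{d-1}\setminus \mathbb{Z}^{d-1})\times\{m\}$ for $m=1,2,\ldots,H$; (iii) $\|\pi(\Psi(x))-\pi(x)\|\leq s^{2}$ for all $x\in X$, where $\pi\colon\mathbb{R}^d\to\mathbb{R}^{d-1}$ is the projection onto the first $d-1$ coordinates.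
   Context: $\|\cdot\|$ is the Euclidean norm. A set is $s$-separated if distinct points are at Euclidean distance at least $s$. A mapping is $L$-bilipschitz if it is injective and both it and its inverse are $L$-Lipschitz. $N$ need not be an integer a priori; $\frac1N\mathbb{Z}^{d-1}=\{z/N: z\in\mathbb{Z}^{d-1}\}$. *)

From HB Require Import structures.
From mathcomp Require Import all_boot all_order all_algebra.
From mathcomp Require Import all_classical all_reals exp.
Set Implicit Arguments. Unset Strict Implicit. Unset Printing Implicit Defensive.
Import Order.TTheory GRing.Theory Num.Theory.
Local Open Scope ring_scope.
Local Open Scope classical_set_scope.

Section Defs.
Variable R : realType.

Definition enorm (n : nat) (v : 'rV[R]_n) : R := Num.sqrt (\sum_(i < n) v 0 i ^+ 2).

(* k-th coordinate (0-indexed) of x in R^d; 0 if k >= d *)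
Definition coord (d : nat) (x : 'rV[R]_d) (k : nat) : R :=
  match @insub nat (fun k => k < d)%N 'I_d k with Some i => x 0 i | None => 0 end.

Definition lastc (d : nat) (x : 'rV[R]_d) : R := coord x d.-1.

Definition projd (d : nat) (x : 'rV[R]_d) : 'rV[R]_(d.-1) :=
  \row_(i < d.-1) coord x i.

Definition separated (d : nat) (s : R) (X : set 'rV[R]_d) : Prop :=
  forall x y, X x -> X y -> x <> y -> s <= enorm (x - y).

Definition bilipschitz (d : nat) (L : R) (f : 'rV[R]_d -> 'rV[R]_d) : Prop :=
  injective f /\
  (forall x y, enorm (f x - f y) <= L * enorm (x - y)) /\
  (forall x y, enorm (x - y) <= L * enorm (f x - f y)).

Definition in_scaled_lattice (n : nat) (N : R) (v : 'rV[R]_n) : Prop :=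
  forall i, exists z : int, v 0 i = z%:~R / N.

Definition in_lattice (n : nat) (v : 'rV[R]_n) : Prop :=
  forall i, exists z : int, v 0 i = z%:~R.

End Defs.

From Pilot Require Import Defs.
From HB Require Import structures.
From mathcomp Require Import all_boot all_order all_algebra.
From mathcomp Require Import all_classical all_reals exp.
From mathcomp Require Import lra ring zify.
Set Implicit Arguments. Unset Strict Implicit. Unset Printing Implicit Defensive.
Import Order.TTheory GRing.Theory Num.Theory.
Local Open Scope ring_scope.
Local Open Scope classical_set_scope.

(* Psi is a horizontal perturbation followed by a vertical one.  Each x in X
   gets a point p(x) of (1/N)Z^(d-1) \ Z^(d-1) within s^2 of pi(x): p(x) lies in
   the cell of pi(x) in a grid of mesh 2M/N, M ~ s^2 N / (2(d-1)), and its
   offsets in that cell spell the base-M digits of the index of the slab of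
   height s/2 containing x (the bound on N leaves enough digits).  Two points of
   X with the same p would be closer than s, so p is injective on X and its
   values are 1/N apart in the sup norm.
   The first map adds (p(x) - pi(x), 0) damped by a tent of radius s/2 around
   each x; as |p(x) - pi(x)| <= s^2, this perturbation of the identity is
   2s-Lipschitz with 2s <= 1/2.  The second map keeps
   pi and, on the sup-norm ball of radius 1/(2N) around each p(x), moves the
   last coordinate by a tent-weighted interpolation between the identity and a
   piecewise linear map of [1/2, H + 1/2] sending the height of x to m; it has
   slopes in [1/(2H), H/s] and is 2NH-Lipschitz in pi. *)

Section EuclideanNorm.
Variables (R : realType) (n : nat).
Implicit Types (u v w : 'rV[R]_n).

Definition sqnorm v : R := \sum_(i < n) v 0 i ^+ 2.

Lemma sqnorm_ge0 v : 0 <= sqnorm v.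
Proof. by apply: sumr_ge0 => i _; rewrite sqr_ge0. Qed.

Lemma enorm_ge0 v : 0 <= enorm v.
Proof. exact: sqrtr_ge0. Qed.

Lemma sqr_enorm v : enorm v ^+ 2 = sqnorm v.
Proof. by rewrite sqr_sqrtr // sqnorm_ge0. Qed.

Lemma enorm_le v c : 0 <= c -> sqnorm v <= c ^+ 2 -> enorm v <= c.
Proof. by move=> c0 h; rewrite -ler_sqr ?nnegrE ?enorm_ge0 // sqr_enorm. Qed.

Lemma enorm_lt v c : 0 <= c -> sqnorm v < c ^+ 2 -> enorm v < c.
Proof. by move=> c0 h; rewrite -ltr_sqr ?nnegrE ?enorm_ge0 // sqr_enorm. Qed.

Lemma enorm_ge v c : 0 <= c -> c ^+ 2 <= sqnorm v -> c <= enorm v.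
Proof. by move=> c0 h; rewrite -ler_sqr ?nnegrE ?enorm_ge0 // sqr_enorm. Qed.

Lemma sqnorm_le_card v c : (forall i, `|v 0 i| <= c) -> sqnorm v <= n%:R * c ^+ 2.
Proof.
move=> h; have sq i : v 0 i ^+ 2 <= c ^+ 2.
  rewrite -real_normK ?num_real //.
  by apply: lerXn2r; rewrite ?nnegrE ?(le_trans _ (h i)).
by apply: le_trans (ler_sum _ (fun i _ => sq i)) _; rewrite sumr_const card_ord mulr_natl.
Qed.

Lemma norm_coord_le_enorm v i : `|v 0 i| <= enorm v.
Proof.
apply: enorm_ge => //; rewrite real_normK ?num_real //.
rewrite /sqnorm (bigD1 i) //= lerDl.
by apply: sumr_ge0 => j _; rewrite sqr_ge0.
Qed.

Lemma enormZ a v : enorm (a *: v) = `|a| * enorm v.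
Proof.
rewrite /enorm -sqrtr_sqr -sqrtrM ?sqr_ge0 // mulr_sumr.
by congr Num.sqrt; apply: eq_bigr => i _; rewrite !mxE exprMn.
Qed.

Lemma enormN v : enorm (- v) = enorm v.
Proof. by rewrite -scaleN1r enormZ normrN normr1 mul1r. Qed.

Lemma enorm_distC u v : enorm (u - v) = enorm (v - u).
Proof. by rewrite -enormN opprB. Qed.

Lemma enorm0 : enorm (0 : 'rV[R]_n) = 0.
Proof. by rewrite -(scale0r 0) enormZ normr0 mul0r. Qed.

Lemma enorm_subrr v : enorm (v - v) = 0.
Proof. by rewrite subrr enorm0. Qed.

Lemma enorm_eq0 v : enorm v = 0 -> v = 0.
Proof.
move=> h; have /eqP : sqnorm v = 0 by rewrite -sqr_enorm h expr0n.
rewrite psumr_eq0 => [/allP v0|i _]; last exact: sqr_ge0.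
apply/rowP => i; apply/eqP; rewrite mxE -sqrf_eq0; exact: v0 (mem_index_enum i).
Qed.

Lemma lagrange_identity u v :
  2 * (sqnorm u * sqnorm v - (\sum_(i < n) u 0 i * v 0 i) ^+ 2) =
  \sum_(i < n) \sum_(j < n) (u 0 i * v 0 j - u 0 j * v 0 i) ^+ 2.
Proof.
set P := \sum_(i < n) u 0 i * v 0 i.
have row_sum i : \sum_(j < n) (u 0 i * v 0 j - u 0 j * v 0 i) ^+ 2 =
    u 0 i ^+ 2 * sqnorm v + sqnorm u * v 0 i ^+ 2 - 2 * (u 0 i * v 0 i) * P.
  rewrite /sqnorm /P !mulr_sumr !mulr_suml -big_split -sumrB /=.
  by apply: eq_bigr => j _; ring.
rewrite (eq_bigr _ (fun i _ => row_sum i)) sumrB big_split /=.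
by rewrite -!mulr_suml -!mulr_sumr -/P -/(sqnorm u) -/(sqnorm v); ring.
Qed.

Lemma cauchy_schwarz u v : \sum_(i < n) u 0 i * v 0 i <= enorm u * enorm v.
Proof.
set S := \sum_(i < n) _.
have uv0 : 0 <= enorm u * enorm v by rewrite mulr_ge0 ?enorm_ge0.
have [S0|S0] := leP S 0; first exact: le_trans S0 uv0.
have : S ^+ 2 <= (enorm u * enorm v) ^+ 2.
  have : 0 <= \sum_(i < n) \sum_(j < n) (u 0 i * v 0 j - u 0 j * v 0 i) ^+ 2.
    by apply: sumr_ge0 => i _; apply: sumr_ge0 => j _; exact: sqr_ge0.
  rewrite exprMn !sqr_enorm -lagrange_identity -/S; lra.
by rewrite ler_sqr ?nnegrE ?(ltW S0).
Qed.

Lemma enormD u v : enorm (u + v) <= enorm u + enorm v.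
Proof.
apply: enorm_le; first by rewrite addr_ge0 ?enorm_ge0.
have -> : sqnorm (u + v) = sqnorm u + 2 * \sum_(i < n) u 0 i * v 0 i + sqnorm v.
  rewrite /sqnorm mulr_sumr -!big_split /=.
  by apply: eq_bigr => i _; rewrite !mxE; ring.
have := cauchy_schwarz u v; rewrite sqrrD -!sqr_enorm; lra.
Qed.

Lemma enormB u v : enorm (u - v) <= enorm u + enorm v.
Proof. by rewrite -(enormN v); exact: enormD. Qed.

Lemma enorm_distD u v w : enorm (u - w) <= enorm (u - v) + enorm (v - w).
Proof. by have := enormD (u - v) (v - w); rewrite addrA subrK. Qed.

End EuclideanNorm.

Section SupNorm.
Variables (R : realType) (n : nat).
Implicit Types (u v w : 'rV[R]_n).

Definition supnorm v : R := \big[Num.max/0]_(i < n) `|v 0 i|.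

Lemma supnorm_ge0 v : 0 <= supnorm v.
Proof. by apply: (big_ind (fun x => 0 <= x)) => // x y hx hy; rewrite le_max hx. Qed.

Lemma norm_coord_le_supnorm v i : `|v 0 i| <= supnorm v.
Proof. by rewrite /supnorm (bigD1 i) //= le_max lexx. Qed.

Lemma supnorm_le v c : 0 <= c -> (forall i, `|v 0 i| <= c) -> supnorm v <= c.
Proof. by move=> c0 h; apply: bigmax_le. Qed.

Lemma supnorm_le_enorm v : supnorm v <= enorm v.
Proof. by apply: supnorm_le => [|i]; [exact: enorm_ge0 | exact: norm_coord_le_enorm]. Qed.

Lemma supnorm_distC u v : supnorm (u - v) = supnorm (v - u).
Proof. by apply: eq_bigr => i _; rewrite !mxE distrC. Qed.

Lemma supnorm_distD u v w : supnorm (u - w) <= supnorm (u - v) + supnorm (v - w).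
Proof.
apply: supnorm_le => [|i]; first by rewrite addr_ge0 ?supnorm_ge0.
rewrite !mxE (le_trans (ler_distD (v 0 i) (u 0 i) (w 0 i))) // lerD //.
  by have := norm_coord_le_supnorm (u - v) i; rewrite !mxE.
by have := norm_coord_le_supnorm (v - w) i; rewrite !mxE.
Qed.

Lemma supnorm_subrr v : supnorm (v - v) = 0.
Proof.
by apply/le_anti; rewrite supnorm_ge0 supnorm_le // => i; rewrite subrr mxE normr0.
Qed.

End SupNorm.

Section LastCoordinate.
Variables (R : realType) (n : nat).
Implicit Types (u v : 'rV[R]_n.+1) (y : 'rV[R]_n).

Lemma coord_ord m (x : 'rV[R]_m) (i : 'I_m) : Defs.coord x i = x 0 i.
Proof. by rewrite /Defs.coord valK. Qed.

Lemma projdE v (i : 'I_n) : projd v 0 i = v 0 (widen_ord (leqnSn n) i).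
Proof. by rewrite mxE -[val i]/(val (widen_ord (leqnSn n) i)) coord_ord. Qed.

Lemma lastcE v : lastc v = v 0 ord_max.
Proof. by rewrite /lastc -[n]/(val (@ord_max n)) coord_ord. Qed.

Lemma projdD u v : projd (u + v) = projd u + projd v.
Proof. by apply/rowP => i; rewrite !(projdE, mxE). Qed.

Lemma projdB u v : projd (u - v) = projd u - projd v.
Proof. by apply/rowP => i; rewrite !(projdE, mxE). Qed.

Lemma lastcD u v : lastc (u + v) = lastc u + lastc v.
Proof. by rewrite !lastcE !mxE. Qed.

Lemma lastcB u v : lastc (u - v) = lastc u - lastc v.
Proof. by rewrite !lastcE !mxE. Qed.

Lemma sqnorm_split v : sqnorm v = sqnorm (projd v) + lastc v ^+ 2.
Proof.
rewrite /sqnorm big_ord_recr /= lastcE; congr (_ + _).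
by apply: eq_bigr => i _; rewrite projdE.
Qed.

Lemma enorm_projd_le v : enorm (projd v) <= enorm v.
Proof. by apply: enorm_ge; rewrite ?enorm_ge0 // sqr_enorm sqnorm_split lerDl sqr_ge0. Qed.

Lemma norm_lastc_le v : `|lastc v| <= enorm v.
Proof. by rewrite lastcE norm_coord_le_enorm. Qed.

Lemma enorm_le_split v : enorm v <= enorm (projd v) + `|lastc v|.
Proof.
apply: enorm_le; first by rewrite addr_ge0 ?enorm_ge0.
rewrite sqnorm_split sqrrD -sqr_enorm real_normK ?num_real //.
by have := enorm_ge0 (projd v); have := normr_ge0 (lastc v); nra.
Qed.

Definition snoc_row y (t : R) : 'rV[R]_n.+1 :=
  \row_(i < n.+1) if (i < n)%N then Defs.coord y i else t.

Lemma projd_snoc y t : projd (snoc_row y t) = y.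
Proof. by apply/rowP => i; rewrite projdE !mxE /= ltn_ord coord_ord. Qed.

Lemma lastc_snoc y t : lastc (snoc_row y t) = t.
Proof. by rewrite lastcE mxE /= ltnn. Qed.

Lemma projd_lastc_inj u v : projd u = projd v -> lastc u = lastc v -> u = v.
Proof.
move=> eq_proj eq_last; apply/rowP => j.
have [k ->|->] := unliftP ord_max j; last by rewrite -!lastcE.
have -> : lift ord_max k = widen_ord (leqnSn n) k.
  by apply: val_inj; rewrite /= /bump leqNgt ltn_ord.
by rewrite -!projdE eq_proj.
Qed.

Lemma enorm_snoc0 y : enorm (snoc_row y 0) = enorm y.
Proof. by rewrite /enorm -!/(sqnorm _) sqnorm_split projd_snoc lastc_snoc expr0n addr0. Qed.

End LastCoordinate.

Section BilipschitzMaps.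
Variables (R : realType) (n : nat).

Lemma perturbation_bilipschitz (f : 'rV[R]_n -> 'rV[R]_n) z w :
    (forall z w, enorm (f z - f w) <= 1 / 2 * enorm (z - w)) ->
  enorm ((z + f z) - (w + f w)) <= 3 / 2 * enorm (z - w) /\
  enorm (z - w) <= 2 * enorm ((z + f z) - (w + f w)).
Proof.
move=> f_lip; have e : (z + f z) - (w + f w) = (z - w) + (f z - f w) by rewrite opprD addrACA.
have := f_lip z w; have := enormD (z - w) (f z - f w).
have := enormB ((z + f z) - (w + f w)) (f z - f w); rewrite e addrK.
by split; lra.
Qed.

Definition shear (g : 'rV[R]_n -> R -> R) (z : 'rV[R]_n.+1) : 'rV[R]_n.+1 :=
  snoc_row (projd z) (g (projd z) (lastc z)).

Lemma shear_bilipschitz (g : 'rV[R]_n -> R -> R) (lo hi L : R) a b :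
    0 < lo -> 0 <= L ->
    (forall y t u, lo * `|u - t| <= `|g y u - g y t| <= hi * `|u - t|) ->
    (forall y y' t, `|g y t - g y' t| <= L * enorm (y - y')) ->
  enorm (shear g a - shear g b) <= (1 + L + hi) * enorm (a - b) /\
  enorm (a - b) <= (1 + (1 + L) / lo) * enorm (shear g a - shear g b).
Proof.
move=> lo_gt0 L_ge0 g_slope g_lip.
have hi_ge0 : 0 <= hi.
  by have /andP[] := g_slope 0 0 1; rewrite subr0 normr1 !mulr1; lra.
have proj_sh : projd (shear g a - shear g b) = projd a - projd b.
  by rewrite projdB !projd_snoc.
have last_sh : lastc (shear g a - shear g b) =
    g (projd a) (lastc a) - g (projd b) (lastc b) by rewrite lastcB !lastc_snoc.
set F := enorm (shear g a - shear g b); set E := enorm (a - b).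
have P_le_E := enorm_projd_le (a - b); have T_le_E := norm_lastc_le (a - b).
have E_le := enorm_le_split (a - b); rewrite projdB lastcB -/E in P_le_E T_le_E E_le.
have P_le_F := enorm_projd_le (shear g a - shear g b).
have F_le := enorm_le_split (shear g a - shear g b).
have G_le_F := norm_lastc_le (shear g a - shear g b).
rewrite proj_sh last_sh -/F in P_le_F F_le G_le_F.
move: (projd a) (projd b) (lastc a) (lastc b) => ya yb ta tb
  in P_le_E T_le_E E_le P_le_F F_le G_le_F *.
have G2 := g_lip ya yb tb; have /andP[G1_lo G1_hi] := g_slope ya tb ta.
have tri1 := ler_distD (g ya tb) (g ya ta) (g yb tb).
have tri2 := ler_distD (g yb tb) (g ya ta) (g ya tb); rewrite (distrC (g yb tb)) in tri2.
have hiT : hi * `|ta - tb| <= hi * E by rewrite ler_wpM2l.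
have LPE : L * enorm (ya - yb) <= L * E by rewrite ler_wpM2l.
have LPF : L * enorm (ya - yb) <= L * F by rewrite ler_wpM2l.
split; first lra.
have T_le : `|ta - tb| <= (1 + L) / lo * F by rewrite mulrAC ler_pdivlMr //; lra.
lra.
Qed.

End BilipschitzMaps.

Section Tents.
Variables (R : realType) (T I : Type) (dist : T -> T -> R).
Hypothesis dist_triangle : forall a b c, dist a c <= dist a b + dist b c.
Hypothesis dist_sym : forall a b, dist a b = dist b a.
Hypothesis dist_refl : forall a, dist a a = 0.
Variables (r : R) (P : I -> Prop) (c : I -> T).
Hypothesis r_gt0 : 0 < r.
Hypothesis centers_sep : forall i j, P i -> P j -> i <> j -> 2 * r <= dist (c i) (c j).

Lemma dist_ge0 a b : 0 <= dist a b.
Proof. by have := dist_triangle a b a; rewrite dist_refl (dist_sym b a); lra. Qed.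

Definition nearest (z : T) : option I :=
  match pselect (exists i, P i /\ dist z (c i) < r) with
  | left h => Some (proj1_sig (cid h))
  | right _ => None
  end.

Definition weight (z : T) : R :=
  if nearest z is Some i then 1 - dist z (c i) / r else 0.

(* Since the balls of radius [r] around the centres are disjoint, [tent g] is
   the sum over [i] of the tents [max(0, 1 - dist z (c i) / r)] times [g i]. *)
Definition tent (V : lmodType R) (g : I -> V) (z : T) : V :=
  if nearest z is Some i then weight z *: g i else 0.

Lemma nearest_some z i : nearest z = Some i -> P i /\ dist z (c i) < r.
Proof. by rewrite /nearest; case: pselect => // h [<-]; exact: (proj2_sig (cid h)). Qed.

Lemma nearest_none z i : nearest z = None -> P i -> r <= dist z (c i).
Proof.
rewrite /nearest; case: pselect => // h _ Pi; rewrite leNgt; apply/negP => lt_r.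
by apply: h; exists i.
Qed.

Lemma nearest_eq z i : P i -> dist z (c i) < r -> nearest z = Some i.
Proof.
move=> Pi lt_r; case E: (nearest z) => [j|]; last by have := nearest_none E Pi; rewrite leNgt lt_r.
have [Pj lt_rj] := nearest_some E; have [->//|ne] := pselect (i = j).
exfalso; have := centers_sep Pi Pj ne; have := dist_triangle (c i) z (c j).
by rewrite (dist_sym (c i) z); lra.
Qed.

Lemma weight_center i : P i -> weight (c i) = 1.
Proof. by move=> Pi; rewrite /weight (nearest_eq Pi) dist_refl ?mul0r ?subr0. Qed.

Lemma tent_center (V : lmodType R) (g : I -> V) i : P i -> tent g (c i) = g i.
Proof. by move=> Pi; rewrite /tent (nearest_eq Pi) ?dist_refl // weight_center ?scale1r. Qed.

Lemma weight_ge0 z : 0 <= weight z.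
Proof.
rewrite /weight; case E: (nearest z) => [i|] //.
have [_ lt_r] := nearest_some E; rewrite subr_ge0 ler_pdivrMr // mul1r; exact: ltW.
Qed.

Lemma weight_le1 z : weight z <= 1.
Proof.
rewrite /weight; case: (nearest z) => [i|] //.
by rewrite lerBlDr lerDl divr_ge0 ?dist_ge0 // ltW.
Qed.

Lemma weight_lipschitz_nearest z w i : nearest z = Some i -> nearest w = Some i ->
  `|weight z - weight w| <= dist z w / r.
Proof.
move=> Ez Ew; rewrite /weight Ez Ew.
have -> : 1 - dist z (c i) / r - (1 - dist w (c i) / r) =
    (dist w (c i) - dist z (c i)) / r by ring.
rewrite normrM [`|r^-1|]gtr0_norm ?invr_gt0 // ler_pM2r ?invr_gt0 // ler_norml.
have := dist_triangle w z (c i); have := dist_triangle z w (c i).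
by rewrite (dist_sym w z); lra.
Qed.

Lemma weightD_le z w : nearest z <> nearest w -> weight z + weight w <= dist z w / r.
Proof.
move=> ne; rewrite ler_pdivlMr // /weight.
case Ez: (nearest z) => [i|]; case Ew: (nearest w) => [j|]; rewrite Ez Ew in ne.
- have [Pi lt_ri] := nearest_some Ez; have [Pj lt_rj] := nearest_some Ew.
  have ij : i <> j by move=> eij; apply: ne; rewrite eij.
  have := centers_sep Pi Pj ij; have := dist_triangle (c i) z (c j).
  have := dist_triangle z w (c j); rewrite (dist_sym (c i) z).
  by rewrite !mulrDl !mulNr !mul1r !divfK ?gt_eqF //; lra.
- have [Pi _] := nearest_some Ez; have := nearest_none Ew Pi.
  have := dist_triangle w z (c i); rewrite (dist_sym w z) addr0.
  by rewrite !mulrDl mulNr mul1r divfK ?gt_eqF //; lra.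
- have [Pj _] := nearest_some Ew; have := nearest_none Ez Pj.
  have := dist_triangle z w (c j).
  by rewrite add0r !mulrDl mulNr mul1r divfK ?gt_eqF //; lra.
- by case: ne.
Qed.

Lemma tent_eq0 (V : lmodType R) (g : I -> V) z :
  (forall i, P i -> r <= dist z (c i)) -> tent g z = 0.
Proof.
rewrite /tent; case E: (nearest z) => [i|] // far.
by have [Pi] := nearest_some E; rewrite ltNge far.
Qed.

Section TentLipschitz.
Variables (V : lmodType R) (nrm : V -> R).
Hypothesis nrmZ : forall a v, nrm (a *: v) = `|a| * nrm v.
Hypothesis nrmB : forall u v, nrm (u - v) <= nrm u + nrm v.
Variables (g : I -> V) (G : R).
Hypothesis G_ge0 : 0 <= G.
Hypothesis g_le : forall i, P i -> nrm (g i) <= G.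

Lemma nrm0 : nrm 0 = 0.
Proof. by rewrite -(scale0r 0) nrmZ normr0 mul0r. Qed.

Lemma nrm_tent_le z : nrm (tent g z) <= G * weight z.
Proof.
rewrite /tent; case E: (nearest z) => [i|]; last by rewrite nrm0 /weight E mulr0.
have [Pi _] := nearest_some E.
by rewrite nrmZ ger0_norm ?weight_ge0 // mulrC ler_wpM2r ?weight_ge0 ?g_le.
Qed.

Lemma tent_lipschitz z w : nrm (tent g z - tent g w) <= G * (dist z w / r).
Proof.
have nrm_ge0 v : 0 <= nrm v by have := nrmB v v; rewrite subrr nrm0; lra.
have [e|ne] := pselect (nearest z = nearest w); last first.
  apply: le_trans (nrmB _ _) (le_trans _ (ler_wpM2l G_ge0 (weightD_le ne))).
  by rewrite mulrDr lerD ?nrm_tent_le.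
rewrite /tent -e; case Ez: (nearest z) => [i|]; last first.
  by rewrite subrr nrm0 mulr_ge0 ?divr_ge0 ?dist_ge0 // ltW.
have [Pi _] := nearest_some Ez.
rewrite -scalerBl nrmZ mulrC ler_pM ?normr_ge0 ?nrm_ge0 ?g_le //.
by apply: (weight_lipschitz_nearest Ez); rewrite -e.
Qed.

End TentLipschitz.

End Tents.

Section PiecewiseLinear.
Variable R : realType.
Implicit Types (a b e t u : R).

Definition clamp a b t : R := if t <= a then a else if b <= t then b else t.

Lemma clamp_left a b t : t <= a -> clamp a b t = a.
Proof. by rewrite /clamp => ->. Qed.

Lemma clamp_right a b t : a <= b -> b <= t -> clamp a b t = b.
Proof.
rewrite /clamp => ab bt; rewrite bt; case: ifP => // ta.
by apply/le_anti; rewrite ab (le_trans bt ta).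
Qed.

Lemma clamp_incr a b t u : a <= b -> t <= u ->
  0 <= clamp a b u - clamp a b t <= u - t.
Proof.
by rewrite /clamp; case: (leP t a); case: (leP u a); case: (leP b t); case: (leP b u); lra.
Qed.

Lemma clampD a b e t : a <= b -> b <= e -> clamp a b t + clamp b e t = clamp a e t + b.
Proof.
by rewrite /clamp; case: (leP t a); case: (leP b t); case: (leP t b); case: (leP e t); lra.
Qed.

Variables (a x0 b m : R).
Hypotheses (a_lt_x0 : a < x0) (x0_lt_b : x0 < b).

Definition slope1 : R := (m - a) / (x0 - a).
Definition slope2 : R := (b - m) / (b - x0).

(* The continuous map, affine on [a, x0] and on [x0, b] and the identity
   elsewhere, with a |-> a, x0 |-> m, b |-> b. *)
Definition plmap t : R :=
  t + (slope1 - 1) * (clamp a x0 t - a) + (slope2 - 1) * (clamp x0 b t - x0).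

Lemma plmap_out t : t <= a \/ b <= t -> plmap t = t.
Proof.
have e1 : slope1 * (x0 - a) = m - a by rewrite /slope1 divfK // subr_eq0 gt_eqF.
have e2 : slope2 * (b - x0) = b - m by rewrite /slope2 divfK // subr_eq0 gt_eqF.
rewrite /plmap => -[ta | bt].
  have tx0 : t <= x0 by rewrite (le_trans ta) ?ltW.
  by rewrite !clamp_left //; ring.
have x0t : x0 <= t by rewrite (le_trans _ bt) ?ltW.
rewrite (clamp_right (ltW a_lt_x0) x0t) (clamp_right (ltW x0_lt_b) bt).
transitivity (t + (slope1 * (x0 - a) - (x0 - a)) + (slope2 * (b - x0) - (b - x0))).
  by ring.
by rewrite e1 e2; ring.
Qed.

Lemma plmap_x0 : plmap x0 = m.
Proof.
have e1 : slope1 * (x0 - a) = m - a by rewrite /slope1 divfK // subr_eq0 gt_eqF.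
rewrite /plmap (clamp_right (ltW a_lt_x0) (lexx x0)) clamp_left //.
by transitivity (x0 + (slope1 * (x0 - a) - (x0 - a))); [ring | rewrite e1; ring].
Qed.

Lemma plmap_incr t u : t <= u -> exists d0 d1 d2 : R,
  [/\ 0 <= d0, 0 <= d1, 0 <= d2, u - t = d0 + d1 + d2 &
      plmap u - plmap t = d0 + slope1 * d1 + slope2 * d2].
Proof.
move=> tu; exists (u - t - (clamp a x0 u - clamp a x0 t) - (clamp x0 b u - clamp x0 b t)).
exists (clamp a x0 u - clamp a x0 t), (clamp x0 b u - clamp x0 b t).
have le_ab := ltW (lt_trans a_lt_x0 x0_lt_b).
have /andP[d1_ge0 _] := clamp_incr (ltW a_lt_x0) tu.
have /andP[d2_ge0 _] := clamp_incr (ltW x0_lt_b) tu.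
have /andP[_ d_le] := clamp_incr le_ab tu.
have := clampD t (ltW a_lt_x0) (ltW x0_lt_b); have := clampD u (ltW a_lt_x0) (ltW x0_lt_b).
by split => //; [lra | ring | rewrite /plmap; ring].
Qed.

Lemma plmap_slope lo hi t u : t <= u -> lo <= 1 <= hi ->
    lo <= slope1 <= hi -> lo <= slope2 <= hi ->
  lo * (u - t) <= plmap u - plmap t <= hi * (u - t).
Proof.
move=> /plmap_incr[d0 [d1 [d2 [d0_ge0 d1_ge0 d2_ge0 -> ->]]]].
move=> /andP[lo1 hi1] /andP[lo_s1 s1_hi] /andP[lo_s2 s2_hi].
apply/andP; split; nra.
Qed.

Lemma plmap_dev t : 0 <= slope1 -> 0 <= slope2 -> `|plmap t - t| <= b - a.
Proof.
move=> s1_ge0 s2_ge0.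
have mono v w : v <= w -> plmap v <= plmap w.
  move=> /plmap_incr[d0 [d1 [d2 [d0_ge0 d1_ge0 d2_ge0 _ e]]]].
  by rewrite -subr_ge0 e; nra.
have dev0 : `|t - t| <= b - a by rewrite subrr normr0 subr_ge0 ltW ?(lt_trans a_lt_x0).
have [ta|a_lt_t] := leP t a; first by rewrite plmap_out //; left.
have [bt|t_lt_b] := leP b t; first by rewrite plmap_out //; right.
have := mono a t (ltW a_lt_t); have := mono t b (ltW t_lt_b).
rewrite (plmap_out (or_introl (lexx a))) (plmap_out (or_intror (lexx b))).
by rewrite ler_norml; lra.
Qed.

End PiecewiseLinear.

Lemma digits_inj (M L j j' : nat) : (0 < M)%N -> (j < M ^ L)%N -> (j' < M ^ L)%N ->
  (forall i, (i < L)%N -> (j %/ M ^ i) %% M = (j' %/ M ^ i) %% M)%N -> j = j'.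
Proof.
move=> M_gt0; elim: L j j' => [|L IH] j j' hj hj' eq_dig.
  by move: hj hj'; rewrite expn0 !ltnS !leqn0 => /eqP-> /eqP->.
have eq_dig0 := eq_dig 0%N (ltn0Sn L); rewrite !expn0 !divn1 in eq_dig0.
have eq_div : (j %/ M = j' %/ M)%N.
  apply: IH; rewrite ?ltn_divLR -?expnSr // => i lt_iL.
  by rewrite -!divnMA -expnS; exact: eq_dig i.+1 lt_iL.
by rewrite (divn_eq j M) (divn_eq j' M) eq_div eq_dig0.
Qed.

Lemma dist_lt_unit_itv (R : realType) (x y h c : R) : 0 < h ->
  c <= x / h < c + 1 -> c <= y / h < c + 1 -> `|x - y| < h.
Proof.
move=> h_gt0 /andP[x1 x2] /andP[y1 y2].
have lt1 : `|x / h - y / h| < 1 by rewrite ltr_norml; apply/andP; split; lra.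
rewrite -(divfK (lt0r_neq0 h_gt0) (x - y)) mulrBl normrM (gtr0_norm h_gt0).
by rewrite -[X in _ < X]mul1r ltr_pM2r.
Qed.

Section LatticeCode.
Variables (R : realType) (n M : nat) (N s : R).

Definition mesh : R := (2 * M)%N%:R / N.
Definition cell (y : 'rV[R]_n.+1) i : int := Num.floor (y 0 i / mesh).
Definition bucket (t : R) : nat := Num.truncn (t / (s / 2)).
Definition digit (t : R) (i : nat) : nat := (bucket t %/ M ^ i) %% M.
Definition is_int (r : R) : bool := `[< exists z : int, r = z%:~R >].

(* [lattice_code y t] is the point of the cell of [y] (in the grid of mesh [2M/N])
   whose [i]-th offset in [(1/N)Z] is twice the [i]-th base-[M] digit of the
   height bucket of [t]; the extra bit on coordinate [0] keeps it off [Z^n.+1]. *)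
Definition parity_bit y t : bool :=
  is_int (((2 * M)%N%:Z * cell y ord0 + (2 * digit t 0)%N%:Z)%:~R / N).
Definition offset y t (i : 'I_n.+1) : nat :=
  (2 * digit t i + ((i == ord0) && parity_bit y t))%N.
Definition lattice_num y t i : int := (2 * M)%N%:Z * cell y i + (offset y t i)%:Z.
Definition lattice_code y t : 'rV[R]_n.+1 := \row_i ((lattice_num y t i)%:~R / N).

Lemma lattice_code_scaled_lattice y t : in_scaled_lattice N (lattice_code y t).
Proof. by move=> i; exists (lattice_num y t i); rewrite mxE. Qed.

Lemma lattice_code_not_lattice y t : 1 < N -> ~ in_lattice (lattice_code y t).
Proof.
move=> N_gt1 /(_ ord0) [z]; rewrite mxE; have N_gt0 : 0 < N := lt_trans ltr01 N_gt1.
have -> : lattice_num y t ord0 =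
    (2 * M)%N%:Z * cell y ord0 + (2 * digit t 0)%N%:Z + parity_bit y t.
  by rewrite /lattice_num /offset eqxx PoszD addrA.
rewrite /parity_bit; case: (boolP (is_int _)) => [/asboolP[z0 e0] | not_int] /= e.
- have e1 : (z - z0)%:~R = 1 / N :> R by rewrite intrB -e -e0 intrD mulr1z; field; rewrite gt_eqF.
  have : (0 < z - z0)%R by rewrite -(ltr0z R) e1 divr_gt0.
  have : (z - z0 < 1)%R by rewrite -(ltrz1 R) e1 ltr_pdivrMr ?mul1r.
  lia.
- by move/negP: not_int; apply; apply/asboolP; exists z; rewrite -e addr0.
Qed.

Hypotheses (M_gt0 : (0 < M)%N) (N_gt0 : 0 < N).

Lemma offset_lt y t i : (offset y t i < 2 * M)%N.
Proof.
have : (digit t i < M)%N by rewrite /digit ltn_pmod.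
by rewrite /offset; case: (_ && _) => /=; lia.
Qed.

Lemma mesh_gt0 : 0 < mesh.
Proof. by rewrite divr_gt0 // ltr0n muln_gt0. Qed.

Lemma cell_close y y' i : cell y i = cell y' i -> `|y 0 i - y' 0 i| < mesh.
Proof.
move=> e; have := floor_itv (y' 0 i / mesh); have := floor_itv (y 0 i / mesh).
by rewrite /cell in e; rewrite e intrD; exact: dist_lt_unit_itv mesh_gt0.
Qed.

Lemma lattice_code_close y t i : `|lattice_code y t 0 i - y 0 i| < mesh.
Proof.
have K_gt0 : 0 < (2 * M)%N%:R :> R by rewrite ltr0n muln_gt0.
have y_itv := floor_itv (y 0 i / mesh); rewrite intrD in y_itv.
apply: dist_lt_unit_itv mesh_gt0 _ y_itv.
have -> : lattice_code y t 0 i / mesh = (cell y i)%:~R + (offset y t i)%:R / (2 * M)%N%:R.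
  rewrite mxE /lattice_num /mesh intrD intrM /= -!pmulrn.
  by field; rewrite gt_eqF ?ltr0n // lt0r_neq0.
have o_lt : (offset y t i)%:R < (2 * M)%N%:R :> R by rewrite ltr_nat offset_lt.
by rewrite lerDl divr_ge0 ?ler0n ?ltW //= ltrD2l ltr_pdivrMr // mul1r.
Qed.

Lemma lattice_num_inj y t y' t' i : lattice_num y t i = lattice_num y' t' i ->
  cell y i = cell y' i /\ offset y t i = offset y' t' i.
Proof.
rewrite /lattice_num => e.
have K_neq0 : (2 * M)%N%:Z != 0 by apply/eqP; lia.
have quot y1 t1 : (((2 * M)%N%:Z * cell y1 i + (offset y1 t1 i)%:Z) %/ (2 * M)%N%:Z)%Z = cell y1 i.
  by rewrite mulrC divzMDl // divz_small ?addr0 // ltz_nat offset_lt.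
have ec : cell y i = cell y' i by rewrite -(quot y t) -(quot y' t') e.
by split => //; move: e; rewrite ec => /addrI [].
Qed.

Lemma lattice_code_inj y t y' t' : lattice_code y t = lattice_code y' t' ->
    (bucket t < M ^ n.+1)%N -> (bucket t' < M ^ n.+1)%N ->
  (forall i, cell y i = cell y' i) /\ bucket t = bucket t'.
Proof.
move=> e bt bt'.
have num_eq i : lattice_num y t i = lattice_num y' t' i.
  have := congr1 (fun v : 'rV[R]_n.+1 => v 0 i) e; rewrite !mxE.
  by move/(mulIf (invr_neq0 (lt0r_neq0 N_gt0)))/eqP; rewrite eqr_int => /eqP.
split=> [i|]; first by have [] := lattice_num_inj (num_eq i).
apply: (digits_inj M_gt0 bt bt') => i lt_in.
have [_] := lattice_num_inj (num_eq (Ordinal lt_in)); rewrite /offset /digit.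
by case: (_ && _); case: (_ && _) => /=; lia.
Qed.

Lemma lattice_code_sep y t y' t' : lattice_code y t <> lattice_code y' t' ->
  1 / N <= supnorm (lattice_code y t - lattice_code y' t').
Proof.
move=> ne; have [i ne_i] : exists i, lattice_code y t 0 i <> lattice_code y' t' 0 i.
  apply: contrapT => all_eq; apply: ne; apply/rowP => i.
  by apply: contrapT => ne_i; apply: all_eq; exists i.
apply: le_trans (norm_coord_le_supnorm _ i); rewrite !mxE in ne_i *.
rewrite -mulrBl -intrB normrM [`|N^-1|]gtr0_norm ?invr_gt0 // ler_pM2r ?invr_gt0 //.
rewrite -intr_norm ler1z -gtz0_ge1 normr_gt0 subr_eq0.
by apply: contra_notN ne_i => /eqP ->.
Qed.

Lemma bucket_close t u : 0 < s -> 0 <= t -> 0 <= u -> bucket t = bucket u -> `|t - u| < s / 2.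
Proof.
move=> s_gt0 t_ge0 u_ge0 e; have s2_gt0 : 0 < s / 2 by rewrite divr_gt0.
have itv x : 0 <= x -> (bucket x)%:R <= x / (s / 2) < (bucket x)%:R + 1.
  by move=> x_ge0; rewrite natr1; exact: truncn_itv (divr_ge0 x_ge0 (ltW s2_gt0)).
by apply: dist_lt_unit_itv s2_gt0 (itv t t_ge0) _; rewrite e; exact: itv.
Qed.

End LatticeCode.

Section Constants.
Variables (R : realType) (k H : nat) (s N : R).
Hypothesis H_ge1 : (1 <= H)%N.
Hypothesis s_gt0 : 0 < s.
Hypothesis s_le : s <= 1 / 4.
Hypothesis N_ge : (2 * Num.sqrt (k.+2)%:R / s) ^+ 3 * powR H%:R (1 / (k.+1)%:R) <= N.

Definition Hroot : R := powR H%:R (1 / (k.+1)%:R).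
Definition base : nat := Num.truncn (s ^+ 2 * N / (2 * (k.+1)%:R)).

Lemma Hroot_ge1 : 1 <= Hroot.
Proof. by rewrite -(powRr0 H%:R) ler_powR ?ler1n // divr_ge0 ?ler0n. Qed.

Lemma Hroot_expn : Hroot ^+ k.+1 = H%:R.
Proof. by rewrite -powR_mulrn ?powR_ge0 // -powRrM mul1r mulVf ?powRr1 ?ler0n ?pnatr_eq0. Qed.

Lemma sqrt_dim_ge : 7 / 5 <= Num.sqrt (k.+2)%:R :> R.
Proof.
have : (7 / 5) ^+ 2 <= Num.sqrt (k.+2)%:R ^+ 2 :> R.
  by rewrite sqr_sqrtr ?ler0n // (le_trans _ (_ : 2 <= (k.+2)%:R)) ?ler_nat //; lra.
by rewrite ler_sqr // nnegrE ?sqrtr_ge0 //; lra.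
Qed.

Lemma inv_s_ge : 4 <= 1 / s.
Proof. by rewrite ler_pdivlMr //; have := s_le; lra. Qed.

Lemma N_ge_cube : (2 * Num.sqrt (k.+2)%:R / s) ^+ 3 <= N.
Proof.
have W_ge0 : 0 <= 2 * Num.sqrt (k.+2)%:R / s by rewrite divr_ge0 ?mulr_ge0 ?sqrtr_ge0 // ltW.
by apply: le_trans N_ge; rewrite ler_peMr ?Hroot_ge1 // exprn_ge0.
Qed.

Lemma N_bounds : 1 / s <= N /\ 1 < N.
Proof.
have := N_ge_cube.
have -> : 2 * Num.sqrt (k.+2)%:R / s = 2 * Num.sqrt (k.+2)%:R * (1 / s) by rewrite mul1r.
move: (Num.sqrt _) sqrt_dim_ge (1 / s) inv_s_ge => D D_ge u u_ge N_ge_W.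
have W_ge_u : u <= 2 * D * u by have := mulr_ge0 (_ : 0 <= 2 * D - 1) (_ : 0 <= u); nra.
have W_ge5 : 5 <= 2 * D * u by nra.
move: (2 * D * u) W_ge_u W_ge5 N_ge_W => W W_ge_u W_ge5 N_ge_W.
have cube : W * 25 <= W ^+ 3 by rewrite !exprS expr0 mulr1 ler_wpM2l; nra.
lra.
Qed.

Lemma base_ge : 5 * Hroot / s <= base%:R.
Proof.
have Hroot_s : 4 <= Hroot * (1 / s) by have := inv_s_ge; have := Hroot_ge1; nra.
rewrite mul1r in Hroot_s.
have D2 : Num.sqrt (k.+2)%:R ^+ 2 = (k.+1)%:R + 1 :> R by rewrite sqr_sqrtr ?ler0n // natr1.
have := N_ge; move: (Num.sqrt _) sqrt_dim_ge D2 => D D_ge D2 N_geD.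
have Y_ge : 4 * D * (Hroot / s) <= s ^+ 2 * N / (2 * (k.+1)%:R).
  rewrite ler_pdivlMr ?mulr_gt0 ?ltr0n //.
  apply: le_trans (ler_wpM2l (sqr_ge0 s) N_geD); rewrite -/Hroot.
  have -> : s ^+ 2 * ((2 * D / s) ^+ 3 * Hroot) = 8 * D ^+ 2 * (D * (Hroot / s)).
    by field; rewrite gt_eqF.
  have DR : 0 <= D * (Hroot / s) by apply: mulr_ge0; lra.
  by rewrite D2; nra.
have DR_ge : 7 / 5 * (Hroot / s) <= D * (Hroot / s) by apply: ler_wpM2r; lra.
have base_gt : s ^+ 2 * N / (2 * (k.+1)%:R) < base%:R + 1 by rewrite natr1 truncnS_gt.
move: (s ^+ 2 * N / _) Y_ge base_gt => Y.
by rewrite -mulrA; lra.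
Qed.

Lemma base_gt0 : (0 < base)%N.
Proof.
have := base_ge; have := inv_s_ge; have := Hroot_ge1.
by rewrite -(ltr_nat R); nra.
Qed.

Lemma base_expn_gt : (2 * H%:R + 1) / s < (base ^ k.+1)%:R.
Proof.
have u_ge := inv_s_ge; have H1 : 1 <= H%:R :> R by rewrite ler1n.
have le_pow : (5 * Hroot / s) ^+ k.+1 <= base%:R ^+ k.+1.
  have Hroot_ge0 : 0 <= Hroot by rewrite powR_ge0.
  by rewrite lerXn2r ?nnegrE ?ler0n ?base_ge // divr_ge0 ?mulr_ge0 // ltW.
have e : (5 * Hroot / s) ^+ k.+1 = (5 * (1 / s)) ^+ k.+1 * H%:R.
  by rewrite -Hroot_expn -exprMn; congr (_ ^+ _); ring.
rewrite e in le_pow.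
have le_5s : 5 * (1 / s) <= (5 * (1 / s)) ^+ k.+1 by rewrite ler_eXnr //; lra.
rewrite natrX (lt_le_trans _ le_pow) //.
by have := ler_wpM2r (ler0n R H) le_5s; nra.
Qed.

Lemma mesh_base_le : 0 < N -> (k.+1)%:R * mesh base N <= s ^+ 2.
Proof.
move=> N_gt0; have k_gt0 : 0 < (k.+1)%:R :> R by rewrite ltr0n.
have : base%:R <= s ^+ 2 * N / (2 * (k.+1)%:R).
  by rewrite truncn_le divr_ge0 ?mulr_ge0 ?sqr_ge0 ?ltW.
rewrite ler_pdivlMr ?mulr_gt0 // => le_base.
by rewrite /mesh natrM mulrA ler_pdivrMr //; lra.
Qed.

End Constants.

Lemma ratio_bounds (R : realType) (p q a b c e : R) : 0 <= a -> 0 < c ->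
  a <= p <= b -> c <= q <= e -> a / e <= p / q <= b / c.
Proof.
move=> a_ge0 c_gt0 /andP[ap pb] /andP[cq qe].
have q_gt0 : 0 < q := lt_le_trans c_gt0 cq.
have e_gt0 : 0 < e := lt_le_trans q_gt0 qe.
by apply/andP; split; rewrite ler_pdivrMr // mulrAC ler_pdivlMr //; nra.
Qed.

Section Construction.
Variables (R : realType) (k H : nat) (s N : R) (X : nat -> set 'rV[R]_k.+2).
Hypothesis H_ge1 : (1 <= H)%N.
Hypothesis s_gt0 : 0 < s.
Hypothesis s_le : s <= 1 / 4.
Hypothesis N_ge : (2 * Num.sqrt (k.+2)%:R / s) ^+ 3 * powR H%:R (1 / (k.+1)%:R) <= N.
Hypothesis X_height : forall m x, (1 <= m <= H)%N -> X m x ->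
  1 / 2 + s <= lastc x <= H%:R + 1 / 2 - s.
Hypothesis X_disj : forall m m', (1 <= m <= H)%N -> (1 <= m' <= H)%N -> m <> m' ->
  X m `&` X m' = set0.
Hypothesis X_sep : separated s (\bigcup_(m in [set m | (1 <= m <= H)%N]) X m).

Definition inX (x : 'rV[R]_k.+2) : Prop := exists2 m, (1 <= m <= H)%N & X m x.

Definition layer (x : 'rV[R]_k.+2) : nat :=
  if pselect (inX x) is left h then projT1 (cid2 h) else 0%N.

Lemma layerP x : inX x -> (1 <= layer x <= H)%N /\ X (layer x) x.
Proof. by rewrite /layer; case: pselect => // h _; case: (cid2 h). Qed.

Lemma layer_eq m x : (1 <= m <= H)%N -> X m x -> layer x = m.
Proof.
move=> m_range Xmx; have [layer_range X_layer] := layerP (ex_intro2 _ _ m m_range Xmx).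
apply: contrapT => ne; have := X_disj layer_range m_range ne.
by move/seteqP => [/(_ x (conj X_layer Xmx))].
Qed.

Lemma inX_height x : inX x -> 1 / 2 + s <= lastc x <= H%:R + 1 / 2 - s.
Proof. by case=> m; exact: X_height. Qed.

Lemma inX_sep x y : inX x -> inX y -> x <> y -> s <= enorm (x - y).
Proof. by case=> [m hm Xm] [m' hm' Xm']; apply: X_sep; [exists m | exists m']. Qed.

Lemma N_gt0 : 0 < N.
Proof. by have [_ N_gt1] := N_bounds H_ge1 s_gt0 s_le N_ge; exact: lt_trans N_gt1. Qed.

Let M_gt0 : (0 < base k s N)%N := base_gt0 H_ge1 s_gt0 s_le N_ge.

Definition lattice_point (x : 'rV[R]_k.+2) : 'rV[R]_k.+1 :=
  lattice_code (base k s N) N s (projd x) (lastc x).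

Lemma sqnorm_mesh_le (v : 'rV[R]_k.+1) :
  (forall i, `|v 0 i| <= mesh (base k s N) N) -> sqnorm v <= s ^+ 4.
Proof.
move=> v_le; apply: le_trans (sqnorm_le_card v_le) _.
have mesh_ge0 : 0 <= mesh (base k s N) N by rewrite divr_ge0 ?ler0n // ltW // N_gt0.
have := mesh_base_le k s_gt0 N_gt0; have : 1 <= (k.+1)%:R :> R by rewrite ler1n.
move: (mesh _ _) mesh_ge0 => h h_ge0 k_ge1 kh; rewrite (_ : 4 = 2 * 2)%N // exprM.
have kh2 : ((k.+1)%:R * h) ^+ 2 <= (s ^+ 2) ^+ 2.
  by apply: lerXn2r; rewrite ?nnegrE ?sqr_ge0 ?(mulr_ge0 (ler0n _ _) h_ge0).
by apply: le_trans kh2; rewrite exprMn ler_wpM2r ?sqr_ge0 //; nra.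
Qed.

Lemma lattice_point_close x : enorm (lattice_point x - projd x) <= s ^+ 2.
Proof.
apply: enorm_le; rewrite ?sqr_ge0 // -exprM; apply: sqnorm_mesh_le => i.
have -> : (lattice_point x - projd x) 0 i = lattice_point x 0 i - projd x 0 i by rewrite !mxE.
by rewrite ltW // lattice_code_close // N_gt0.
Qed.

Lemma bucket_lt x : inX x -> (bucket s (lastc x) < base k s N ^ k.+1)%N.
Proof.
move=> /inX_height /andP[t_ge t_le]; have s_pos := s_gt0.
have t_ge0 : 0 <= lastc x / (s / 2) by rewrite divr_ge0 ?divr_ge0 ?ltW //; lra.
rewrite -(ltr_nat R); apply: le_lt_trans (base_expn_gt H_ge1 s_gt0 s_le N_ge).
apply: le_trans (_ : lastc x / (s / 2) <= _); first by rewrite truncn_le.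
have -> : (2 * H%:R + 1) / s = (H%:R + 1 / 2) / (s / 2) by field; rewrite gt_eqF.
by rewrite ler_pM2r ?invr_gt0 ?divr_gt0 //; lra.
Qed.

Lemma sqr_s_le : s ^+ 2 <= 1 / 16.
Proof.
have -> : 1 / 16 = (1 / 4) ^+ 2 :> R by rewrite expr_div_n expr1n; congr (_ / _); lra.
by apply: lerXn2r; rewrite ?nnegrE //; [exact: ltW | lra].
Qed.

Lemma lattice_point_inj x y : inX x -> inX y -> lattice_point x = lattice_point y -> x = y.
Proof.
move=> Xx Xy e; apply: contrapT => ne; have := inX_sep Xx Xy ne; apply/negP; rewrite -ltNge.
have [same_cell same_bucket] := lattice_code_inj M_gt0 N_gt0 e (bucket_lt Xx) (bucket_lt Xy).
have /andP[tx _] := inX_height Xx; have /andP[ty _] := inX_height Xy.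
have s_pos := s_gt0.
have tx0 : 0 <= lastc x by lra.
have ty0 : 0 <= lastc y by lra.
have close_t := bucket_close s_gt0 tx0 ty0 same_bucket.
apply: enorm_lt; rewrite ?ltW // sqnorm_split lastcB.
have proj_le : sqnorm (projd (x - y)) <= s ^+ 4.
  apply: sqnorm_mesh_le => i; rewrite projdB.
  have -> : (projd x - projd y) 0 i = projd x 0 i - projd y 0 i by rewrite !mxE.
  by rewrite ltW // cell_close // N_gt0.
have last_lt : (lastc x - lastc y) ^+ 2 < (s / 2) ^+ 2.
  by rewrite -real_normK ?num_real // ltrXn2r // close_t; lra.
have : s ^+ 4 <= s ^+ 2 / 16.
  by rewrite (_ : 4 = 2 + 2)%N // exprD ler_pM2l ?exprn_gt0 // -div1r sqr_s_le.
have : 0 < s ^+ 2 by rewrite exprn_gt0.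
have : (s / 2) ^+ 2 = s ^+ 2 / 4 by field.
lra.
Qed.

Lemma lattice_point_sep x y : inX x -> inX y -> x <> y ->
  2 * (1 / (2 * N)) <= supnorm (lattice_point x - lattice_point y).
Proof.
move=> Xx Xy ne; have N_pos := N_gt0.
rewrite (_ : 2 * (1 / (2 * N)) = 1 / N); last by field; rewrite gt_eqF.
by apply: (lattice_code_sep N_gt0) => e; apply: ne; exact: lattice_point_inj.
Qed.

Lemma half_s_gt0 : 0 < s / 2.
Proof. by rewrite divr_gt0. Qed.

Lemma centers_sep x y : inX x -> inX y -> x <> y -> 2 * (s / 2) <= enorm (id x - id y).
Proof. by move=> Xx Xy ne; rewrite mulrC divfK ?pnatr_eq0 //; exact: inX_sep. Qed.

Definition hshift (z : 'rV[R]_k.+2) : 'rV[R]_k.+2 :=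
  tent (fun a b => enorm (a - b)) (s / 2) inX id
    (fun x => snoc_row (lattice_point x - projd x) 0) z.

Lemma hshift_lipschitz z w : enorm (hshift z - hshift w) <= 1 / 2 * enorm (z - w).
Proof.
have g_le x : inX x -> enorm (snoc_row (lattice_point x - projd x) 0) <= s ^+ 2.
  by move=> _; rewrite enorm_snoc0 lattice_point_close.
apply: le_trans (tent_lipschitz (@enorm_distD R k.+2) (@enorm_distC R k.+2)
  (@enorm_subrr R k.+2) half_s_gt0 centers_sep (@enormZ R k.+2) (@enormB R k.+2)
  (sqr_ge0 s) g_le z w) _.
have s_pos := s_gt0; have s_small := s_le.
rewrite (_ : s ^+ 2 * (enorm (z - w) / (s / 2)) = 2 * s * enorm (z - w)); last first.
  by field; rewrite gt_eqF.
by apply: ler_wpM2r; [exact: enorm_ge0 | lra].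
Qed.

Lemma hshift_center x : inX x -> x + hshift x = snoc_row (lattice_point x) (lastc x).
Proof.
move=> Xx; rewrite /hshift (tent_center (@enorm_distD R k.+2) (@enorm_distC R k.+2)
  (@enorm_subrr R k.+2) half_s_gt0 centers_sep _ Xx).
apply: projd_lastc_inj; first by rewrite projdD !projd_snoc addrC subrK.
by rewrite lastcD !lastc_snoc addr0.
Qed.

Lemma hshift_out z : ~ (1 / 2 < lastc z < H%:R + 1 / 2) -> hshift z = 0.
Proof.
move=> z_out; apply: tent_eq0 => x Xx; have /andP[x_lo x_hi] := inX_height Xx.
apply: le_trans (norm_lastc_le _); rewrite lastcB real_leNgt ?num_real // ltr_norml.
apply/negP => /andP[lt1 lt2]; apply: z_out; have s_pos := s_gt0.
by apply/andP; split; lra.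
Qed.

Definition lo : R := 1 / 2 / H%:R.
Definition hi : R := H%:R / s.

Lemma lo_hi_bounds : [/\ 0 < lo, lo <= 1 & 1 <= hi].
Proof.
have H1 : 1 <= H%:R :> R by rewrite ler1n.
have s_pos := s_gt0; have s_small := s_le.
split; rewrite /lo /hi.
- by rewrite divr_gt0 //; lra.
- by rewrite ler_pdivrMr; lra.
- by rewrite ler_pdivlMr; lra.
Qed.

Definition vmap (x : 'rV[R]_k.+2) : R -> R :=
  plmap (1 / 2) (lastc x) (H%:R + 1 / 2) (layer x)%:R.

Lemma vmap_props x : inX x ->
  [/\ 1 / 2 < lastc x, lastc x < H%:R + 1 / 2,
      lo <= slope1 (1 / 2) (lastc x) (layer x)%:R <= hi &
      lo <= slope2 (lastc x) (H%:R + 1 / 2) (layer x)%:R <= hi].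
Proof.
move=> Xx; have /andP[t_lo t_hi] := inX_height Xx; have s_pos := s_gt0.
have [/andP[m_ge1 m_leH] _] := layerP Xx.
have m_lo : 1 <= (layer x)%:R :> R by rewrite ler1n.
have m_hi : (layer x)%:R <= H%:R :> R by rewrite ler_nat.
split; try lra; apply: ratio_bounds => //; try lra; apply/andP; split; lra.
Qed.

Lemma vmap_dev x t : inX x -> `|vmap x t - t| <= H%:R.
Proof.
move=> /vmap_props[a_lt b_lt /andP[s1 _] /andP[s2 _]]; have [lo_gt0 _ _] := lo_hi_bounds.
rewrite (_ : H%:R = H%:R + 1 / 2 - 1 / 2); last by ring.
by apply: plmap_dev => //; lra.
Qed.

Lemma vmap_center x : inX x -> vmap x (lastc x) = (layer x)%:R.
Proof. by move=> /vmap_props[a_lt b_lt _ _]; exact: plmap_x0. Qed.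

Lemma half_inv_N_gt0 : 0 < 1 / (2 * N).
Proof. by rewrite divr_gt0 // mulr_gt0 // N_gt0. Qed.

Definition vshift (y : 'rV[R]_k.+1) (t : R) : R :=
  tent (fun a b => supnorm (a - b)) (1 / (2 * N)) inX lattice_point
    (fun x => (vmap x t - t : R^o)) y.

Definition height (y : 'rV[R]_k.+1) (t : R) : R := t + vshift y t.

Lemma height_lipschitz y y' t :
  `|height y t - height y' t| <= 2 * N * H%:R * enorm (y - y').
Proof.
have N_pos := N_gt0; rewrite /height opprD addrACA subrr add0r.
apply: le_trans (tent_lipschitz (@supnorm_distD R k.+1) (@supnorm_distC R k.+1)
  (@supnorm_subrr R k.+1) half_inv_N_gt0 lattice_point_sep (V := R^o) (nrm := Num.norm)
  (g := fun x => (vmap x t - t : R^o)) (@normrM _) (@ler_normB _ _) (ler0n R H)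
  (fun x Xx => vmap_dev t Xx) y y') _.
rewrite (_ : H%:R * (supnorm (y - y') / (1 / (2 * N))) = 2 * N * H%:R * supnorm (y - y')).
  by rewrite ler_wpM2l ?supnorm_le_enorm // !mulr_ge0 ?ler0n // ltW.
by field; rewrite gt_eqF.
Qed.

Lemma height_mono y t u : t <= u -> lo * (u - t) <= height y u - height y t <= hi * (u - t).
Proof.
move=> tu; have [lo_gt0 lo_le1 hi_ge1] := lo_hi_bounds.
have ut : 0 <= u - t by rewrite subr_ge0.
rewrite /height /vshift /tent; case E: nearest => [x|].
  2: by rewrite !addr0; apply/andP; split; nra.
have [Xx _] := nearest_some E; have [a_lt b_lt s1 s2] := vmap_props Xx.
have lo1hi : lo <= 1 <= hi by rewrite lo_le1 hi_ge1.
have /andP[v_lo v_hi] := plmap_slope a_lt b_lt tu lo1hi s1 s2.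
set l := weight _ _ _ _ y.
have l_ge0 : 0 <= l := weight_ge0 _ _ _ half_inv_N_gt0 y.
have l_le1 : l <= 1 := weight_le1 (@supnorm_distD R k.+1) (@supnorm_distC R k.+1)
  (@supnorm_subrr R k.+1) _ _ half_inv_N_gt0 y.
rewrite -/(vmap x u) -/(vmap x t) in v_lo v_hi.
have -> : u + l *: (vmap x u - u : R^o) - (t + l *: (vmap x t - t : R^o)) =
    (1 - l) * (u - t) + l * (vmap x u - vmap x t) :> R by rewrite /GRing.scale /=; ring.
have p1 : 0 <= (1 - l) * ((u - t) - lo * (u - t)) by apply: mulr_ge0; nra.
have p2 : 0 <= l * ((vmap x u - vmap x t) - lo * (u - t)) by apply: mulr_ge0; lra.
have p3 : 0 <= (1 - l) * (hi * (u - t) - (u - t)) by apply: mulr_ge0; nra.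
have p4 : 0 <= l * (hi * (u - t) - (vmap x u - vmap x t)) by apply: mulr_ge0; lra.
apply/andP; split; nra.
Qed.

Lemma height_slope y t u : lo * `|u - t| <= `|height y u - height y t| <= hi * `|u - t|.
Proof.
wlog tu : t u / t <= u.
  move=> hw; have [tu|ut] := leP t u; first exact: hw.
  by rewrite distrC (distrC (height y u)); apply: hw; exact: ltW.
have /andP[h_lo h_hi] := height_mono y tu; have [lo_gt0 _ _] := lo_hi_bounds.
have ut : 0 <= u - t by rewrite subr_ge0.
by rewrite !ger0_norm ?h_lo ?h_hi // (le_trans _ h_lo) // mulr_ge0 // ltW.
Qed.

Lemma height_center x : inX x -> height (lattice_point x) (lastc x) = (layer x)%:R.
Proof.
move=> Xx; rewrite /height /vshift (tent_center (@supnorm_distD R k.+1)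
  (@supnorm_distC R k.+1) (@supnorm_subrr R k.+1) half_inv_N_gt0 lattice_point_sep _ Xx).
by rewrite vmap_center // addrC subrK.
Qed.

Lemma height_out y t : ~ (1 / 2 < t < H%:R + 1 / 2) -> height y t = t.
Proof.
move=> t_out; rewrite /height /vshift /tent; case E: nearest => [x|]; last by rewrite addr0.
have [Xx _] := nearest_some E; have [a_lt b_lt _ _] := vmap_props Xx.
rewrite /vmap plmap_out ?subrr ?scaler0 ?addr0 //.
have [t_le|t_gt] := leP t (1 / 2); [by left | right].
by rewrite leNgt; apply/negP => t_lt; apply: t_out; rewrite t_gt t_lt.
Qed.

Lemma bilipschitz_constants :
  (1 + 2 * N * H%:R + hi) * (3 / 2) <= 2 ^+ 8 * N ^+ 2 * H%:R ^+ 2 /\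
  2 * (1 + (1 + 2 * N * H%:R) / lo) <= 2 ^+ 8 * N ^+ 2 * H%:R ^+ 2.
Proof.
have [N_ge_inv N_gt1] := N_bounds H_ge1 s_gt0 s_le N_ge.
have H1 : 1 <= H%:R :> R by rewrite ler1n.
have hi_le : hi <= N * H%:R by rewrite /hi mulrC ler_wpM2r // -div1r.
have HP : H%:R <= N * H%:R by rewrite ler_peMl //; lra.
have P1 : 1 <= N * H%:R by lra.
have -> : (1 + 2 * N * H%:R) / lo = 2 * H%:R + 4 * (N * H%:R) * H%:R.
  by rewrite /lo; field; rewrite gt_eqF // (lt_le_trans ltr01).
have -> : 2 ^+ 8 * N ^+ 2 * H%:R ^+ 2 = 256 * (N * H%:R) ^+ 2 :> R.
  by ring.
rewrite -mulrA in hi_le *; move: (N * H%:R) hi_le HP P1 => P hi_le HP P1.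
by split; nra.
Qed.

Definition Psi (z : 'rV[R]_k.+2) : 'rV[R]_k.+2 := shear height (z + hshift z).

Lemma Psi_bilipschitz z w :
  enorm (Psi z - Psi w) <= 2 ^+ 8 * N ^+ 2 * H%:R ^+ 2 * enorm (z - w) /\
  enorm (z - w) <= 2 ^+ 8 * N ^+ 2 * H%:R ^+ 2 * enorm (Psi z - Psi w).
Proof.
have [lo_gt0 _ hi_ge1] := lo_hi_bounds; have [K1 K2] := bilipschitz_constants.
have L_ge0 : 0 <= 2 * N * H%:R by rewrite !mulr_ge0 ?ler0n // ltW // N_gt0.
have [h_fwd h_inv] := perturbation_bilipschitz z w hshift_lipschitz.
have [v_fwd v_inv] := shear_bilipschitz (z + hshift z) (w + hshift w) lo_gt0
  L_ge0 height_slope height_lipschitz.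
rewrite -/(Psi z) -/(Psi w) in v_fwd v_inv; split.
- apply: le_trans v_fwd (le_trans (ler_wpM2l _ h_fwd) _); first lra.
  by rewrite mulrA ler_wpM2r ?enorm_ge0.
- apply: le_trans h_inv (le_trans (ler_wpM2l _ v_inv) _) => //.
  by rewrite mulrA ler_wpM2r ?enorm_ge0.
Qed.

Theorem construction : exists Psi : 'rV[R]_k.+2 -> 'rV[R]_k.+2,
    bilipschitz (2 ^+ 8 * N ^+ 2 * H%:R ^+ 2) Psi /\
    (forall x, ~ (1 / 2 < lastc x < H%:R + 1 / 2) -> Psi x = x) /\
    (forall m x, (1 <= m <= H)%N -> X m x ->
       [/\ in_scaled_lattice N (projd (Psi x)),
           ~ in_lattice (projd (Psi x)) &
           lastc (Psi x) = m%:R]) /\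
    (forall m x, (1 <= m <= H)%N -> X m x ->
       enorm (projd (Psi x) - projd x) <= s ^+ 2).
Proof.
have [_ N_gt1] := N_bounds H_ge1 s_gt0 s_le N_ge.
have Psi_center x : inX x -> Psi x = snoc_row (lattice_point x) (layer x)%:R.
  by move=> Xx; rewrite /Psi hshift_center // /shear projd_snoc lastc_snoc height_center.
exists Psi; split; [split; [|split] | split; [|split]].
- move=> z w e; have [_] := Psi_bilipschitz z w; rewrite e subrr enorm0 mulr0 => le0.
  by apply/subr0_eq/enorm_eq0; apply/le_anti; rewrite le0 enorm_ge0.
- by move=> z w; have [] := Psi_bilipschitz z w.
- by move=> z w; have [] := Psi_bilipschitz z w.
- move=> z z_out; rewrite /Psi hshift_out // addr0 /shear height_out //.
  by apply: projd_lastc_inj; rewrite ?projd_snoc ?lastc_snoc.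
- move=> m x m_range Xmx; have Xx : inX x by exists m.
  rewrite Psi_center // projd_snoc lastc_snoc (layer_eq m_range Xmx).
  by split; [exact: lattice_code_scaled_lattice | exact: lattice_code_not_lattice _ _ N_gt1 |].
- move=> m x m_range Xmx; have Xx : inX x by exists m.
  by rewrite Psi_center // projd_snoc lattice_point_close.
Qed.

End Construction.

Unset Implicit Arguments.

Theorem lemma6p2 (R : realType) (d H : nat) (s N : R)
  (X : nat -> set 'rV[R]_d) :
  (2 <= d)%N -> (1 <= H)%N ->
  0 < s -> s <= 1 / 4 ->
  (2 * Num.sqrt (d%:R) / s) ^+ 3 * powR (H%:R) (1 / (d.-1)%:R) <= N ->
  (forall m x, (1 <= m <= H)%N -> X m x ->
     1 / 2 + s <= lastc x <= H%:R + 1 / 2 - s) ->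
  (forall m m', (1 <= m <= H)%N -> (1 <= m' <= H)%N -> m <> m' ->
     X m `&` X m' = set0) ->
  separated s (\bigcup_(m in [set m | (1 <= m <= H)%N]) X m) ->
  exists Psi : 'rV[R]_d -> 'rV[R]_d,
    bilipschitz (2 ^+ 8 * N ^+ 2 * H%:R ^+ 2) Psi /\
    (forall x, ~ (1 / 2 < lastc x < H%:R + 1 / 2) -> Psi x = x) /\
    (forall m x, (1 <= m <= H)%N -> X m x ->
       [/\ in_scaled_lattice N (projd (Psi x)),
           ~ in_lattice (projd (Psi x)) &
           lastc (Psi x) = m%:R]) /\
    (forall m x, (1 <= m <= H)%N -> X m x ->
       enorm (projd (Psi x) - projd x) <= s ^+ 2).
Proof.
case: d X => [|[|k]] X // _ H_ge1 s_gt0 s_le N_ge X_height X_disj X_sep.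
exact: construction H_ge1 s_gt0 s_le N_ge X_height X_disj X_sep.
Qed.
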